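(* Let $\mathfrak{b}\subset\mathfrak{g}=\mathfrak{gl}(n+1,\mathbb{C})$ be a Borel subalgebra containing the Cartan subalgebra of diagonal matrices. Then $\mathfrak{b}$ contains strongly regular elements of $\mathfrak{g}$.
   Context: For $x\in\mathfrak{g}$ and $1\le i\le n+1$, $x_i$ denotes the upper left $i\times i$ submatrix of $x$, and $f_{i,j}(x)=\mathrm{Tr}(x_i^j)$ for $1\le j\le i\le n+1$. An element $x\in\mathfrak{g}$ is strongly regular if the differentials $\{df_{i,j}(x):1\le j\le i\le n+1\}$ are linearly independent in $T_x^*\mathfrak{g}$. *)

From HB Require Import structures.
From mathcomp Require Import all_boot all_order all_algebra.
From mathcomp Require Import Rstruct complex.
From mathcomp Require Import mpoly.
From Stdlib Require Rdefinitions.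
Set Implicit Arguments. Unset Strict Implicit. Unset Printing Implicit Defensive.
Import Order.TTheory GRing.Theory Num.Theory.
Local Open Scope ring_scope.

Definition C : Type := complex Rdefinitions.R.

Definition lie_bracket (n : nat) (x y : 'M[C]_n) : 'M[C]_n := x *m y - y *m x.

Definition is_lie_subalgebra (n : nat) (S : {vspace 'M[C]_n}) : Prop :=
  forall x y, x \in S -> y \in S -> lie_bracket x y \in S.

(* Derived algebra [S,S]: the span of all brackets of elements of S
   (by bilinearity, spanned by the brackets of basis vectors). *)
Definition derived (n : nat) (S : {vspace 'M[C]_n}) : {vspace 'M[C]_n} :=
  <<[seq lie_bracket x y | x <- vbasis S, y <- vbasis S]>>%VS.

Definition is_solvable (n : nat) (S : {vspace 'M[C]_n}) : Prop :=
  exists k : nat, iter k (@derived n) S = 0%VS.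

Definition is_borel (n : nat) (S : {vspace 'M[C]_n}) : Prop :=
  [/\ is_lie_subalgebra S, is_solvable S &
      forall S' : {vspace 'M[C]_n},
        is_lie_subalgebra S' -> is_solvable S' -> (S <= S')%VS -> S' = S].

Definition contains_diagonal_cartan (n : nat) (S : {vspace 'M[C]_n}) : Prop :=
  forall d : 'rV[C]_n, diag_mx d \in S.

(* Coordinates on g: the polynomial ring in the (n+1)^2 matrix entries;
   variable number mxvec_index i j is the (i,j) entry. *)
Definition coordR (N : nat) := {mpoly C[N * N]}.

Definition genmx (N : nat) : 'M[coordR N]_N :=
  \matrix_(i < N, j < N) 'X_(mxvec_index i j).

Definition ulsub (T : Type) (N : nat) (i : 'I_N) (x : 'M[T]_N) : 'M[T]_(i.+1) :=
  \matrix_(a < i.+1, b < i.+1) x (widen_ord (ltn_ord i) a) (widen_ord (ltn_ord i) b).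

(* Index set {(i,j) : 1 <= j <= i <= N}, encoded 0-based:
   p = (i', j') : 'I_N * 'I_N with j' <= i' stands for (i, j) = (i'+1, j'+1). *)
Definition GZindex (N : nat) : finType :=
  {p : 'I_N * 'I_N | (p.2 <= p.1)%N}.

Definition fGZ (N : nat) (p : GZindex N) : coordR N :=
  let: (i, j) := val p in \tr ((ulsub i (genmx N)) ^+ j.+1).

(* the point x as a valuation of the coordinate variables:
   coords x (mxvec_index i j) = x i j *)
Definition coords (N : nat) (x : 'M[C]_N) : 'I_(N * N) -> C :=
  fun k => mxvec x 0 k.

(* the differential df_{i,j}(x) in T_x^* g, written in the dual basis of the
   coordinates: the row vector of partial derivatives at x *)
Definition dGZ (N : nat) (p : GZindex N) (x : 'M[C]_N) : 'rV[C]_(N * N) :=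
  \row_(k < N * N) (mderiv k (fGZ p)).@[coords x].

Definition strongly_regular (N : nat) (x : 'M[C]_N) : Prop :=
  forall c : GZindex N -> C,
    \sum_(p : GZindex N) c p *: dGZ p x = 0 -> forall p, c p = 0.

From Pilot Require Import Defs.
From HB Require Import structures.
From mathcomp Require Import all_boot all_order all_algebra.
From mathcomp Require Import Rstruct complex mpoly.
From mathcomp Require Import zify ring.
Set Implicit Arguments. Unset Strict Implicit. Unset Printing Implicit Defensive.
Import Order.TTheory GRing.Theory Num.Theory.
Local Open Scope ring_scope.

(* A Borel subalgebra [b] containing the diagonal matrices is spanned by them and by the root
   vectors [E u v] it contains. Setting [u < v] when [E u v \in b] gives a strict total order on
   the indices: it is transitive because [[E u v, E v w]] = [E u w], antisymmetric because
   [E u v] and [E v u] would generate a copy of sl_2 inside the solvable [b], and total because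
   otherwise [b] would lie properly inside the solvable algebra of matrices that are triangular
   for a larger order. Hence [b] contains [x = diag(d) + sum_(u < v) E u v], with [d u = 2 u].

   Every upper-left block [x_i] of [x] has the same shape. The derivative of [f_(i,j)] in the
   coordinate [x_(a,b)] is [(j+1) (x_i^j)_(b,a)], so a linear relation among the [df_(i,j)(x)],
   read off on the last row and column of the largest block [i] it involves, says that the last
   row and column of [p(x_i)] vanish for some polynomial [p] of degree at most [i]. Pairing with
   left and right eigenvectors of [x_i] that are nonzero at the last index (they exist because
   [d a - d b <> -1]) shows that [p] vanishes at the [i+1] distinct eigenvalues of [x_i], so
   [p = 0]; by downward induction on [i] the relation is trivial. *)

(** * Strict orders on finite types *)

Section StrictOrder.
Variables (T : finType) (R : rel T).
Hypothesis R_irr : irreflexive R.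
Hypothesis R_trans : forall u v w, R u v -> R v w -> R u w.

Lemma rel_asym u v : R u v -> R v u = false.
Proof. by move=> Ruv; apply/negbTE/negP => /(R_trans Ruv); rewrite R_irr. Qed.

Lemma rel_neq u v : R u v -> u != v.
Proof. by apply: contraTneq => ->; rewrite R_irr. Qed.

Definition height u := #|[set z | R z u]|.

Lemma height_lt u v : R u v -> (height u < height v)%N.
Proof.
move=> Ruv; apply: proper_card; apply/properP; split.
  by apply/subsetP => z; rewrite !inE => /R_trans; apply.
by exists u; rewrite !inE ?Ruv ?R_irr.
Qed.

Lemma height_le_card u : (height u <= #|T|)%N.
Proof. exact: max_card. Qed.

Section Extension.
Variables u v : T.
Hypotheses (neq_uv : u != v) (nRvu : ~~ R v u).

Definition rel_extend : rel T :=
  fun x y => R x y || ((x == u) || R x u) && ((v == y) || R v y).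

Lemma rel_extend_irr : irreflexive rel_extend.
Proof.
move=> x; rewrite /rel_extend R_irr /=; apply/negbTE/negP.
case/andP=> /orP[/eqP->|Rxu] /orP[/eqP vx|Rvx].
- by move: neq_uv; rewrite vx eqxx.
- by move: nRvu; rewrite Rvx.
- by move: nRvu; rewrite vx Rxu.
- by move: nRvu; rewrite (R_trans Rvx Rxu).
Qed.

Lemma rel_extend_trans x y z :
  rel_extend x y -> rel_extend y z -> rel_extend x z.
Proof.
have below_u a c : (a == u) || R a u -> R c a -> (c == u) || R c u.
  by case/orP=> [/eqP-> ->|Rau /R_trans->]; rewrite ?orbT.
have above_v a c : (v == a) || R v a -> R a c -> (v == c) || R v c.
  by case/orP=> [/eqP-> ->|/R_trans Rva /Rva->]; rewrite ?orbT.
rewrite /rel_extend; case/orP=> [Rxy|/andP[xu vy]]; case/orP=> [Ryz|/andP[yu vz]].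
- by rewrite (R_trans Rxy Ryz).
- by rewrite (below_u _ _ yu Rxy) vz orbT.
- by rewrite xu (above_v _ _ vy Ryz) orbT.
- by have := rel_extend_irr y; rewrite /rel_extend R_irr yu vy.
Qed.

End Extension.

Hypothesis R_total : forall u v, u != v -> R u v || R v u.

Lemma rel_total_le u v : (u == v) || R u v || R v u.
Proof. by have [->|/R_total->] := eqVneq u v; rewrite ?eqxx ?orbT. Qed.

Lemma rel_pred c b :
  R c b -> exists2 b', R b' b & forall a, R a b = (a == b') || R a b'.
Proof.
move=> Rcb; case: (@arg_maxnP _ c [pred a | R a b] height Rcb) => b' Rb'b b'_max; exists b' => // a.
apply/idP/idP => [Rab|/orP[/eqP->//|Rab']]; last exact: R_trans Rab' Rb'b.
have [//|ab'] := eqVneq a b'.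
case/orP: (R_total ab') => [->|Rb'a]; first by rewrite orbT.
by have := b'_max a Rab; have := height_lt Rb'a; lia.
Qed.

End StrictOrder.

(** * Brackets, derived algebras and root vectors *)

Section LieBracket.
Variable N : nat.
Implicit Types (x y : 'M[C]_N) (S W : {vspace 'M[C]_N}).

Lemma lie_bracketZl a x y : lie_bracket (a *: x) y = a *: lie_bracket x y.
Proof. by rewrite /lie_bracket scalerBr -scalemxAl -scalemxAr. Qed.

Lemma lie_bracketZr a x y : lie_bracket x (a *: y) = a *: lie_bracket x y.
Proof. by rewrite /lie_bracket scalerBr -scalemxAl -scalemxAr. Qed.

Lemma lie_bracket_suml I (r : seq I) (P : pred I) (F : I -> 'M[C]_N) y :
  lie_bracket (\sum_(i <- r | P i) F i) y = \sum_(i <- r | P i) lie_bracket (F i) y.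
Proof. by rewrite /lie_bracket mulmx_suml mulmx_sumr -sumrB. Qed.

Lemma lie_bracket_sumr I (r : seq I) (P : pred I) (F : I -> 'M[C]_N) y :
  lie_bracket y (\sum_(i <- r | P i) F i) = \sum_(i <- r | P i) lie_bracket y (F i).
Proof. by rewrite /lie_bracket mulmx_suml mulmx_sumr -sumrB. Qed.

Lemma mem_derived S x y : x \in S -> y \in S -> lie_bracket x y \in derived S.
Proof.
move=> xS yS; rewrite -(span_basis (vbasisP S)) in xS yS.
rewrite (coord_span xS) (coord_span yS).
rewrite lie_bracket_suml; apply: rpred_sum => i _; rewrite lie_bracketZl; apply: rpredZ.
rewrite lie_bracket_sumr; apply: rpred_sum => j _; rewrite lie_bracketZr; apply: rpredZ.
apply: memv_span; apply/allpairsP; exists ((vbasis S)`_i, (vbasis S)`_j).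
by split; rewrite // mem_nth ?size_tuple.
Qed.

Lemma derived_subv S W :
  (forall x y, x \in S -> y \in S -> lie_bracket x y \in W) -> (derived S <= W)%VS.
Proof.
move=> SW; apply/span_subvP => z /allpairsP[[x y] /= [xS yS ->]].
by apply: SW; apply: vbasis_mem.
Qed.

End LieBracket.

Section MatrixUnits.
Variables (R : ringType) (N : nat).
Local Notation E := (@delta_mx R N N).

Lemma delta_mx_neq0 u v : E u v != 0.
Proof. by apply/eqP => /matrixP/(_ u v)/eqP; rewrite !mxE !eqxx oner_eq0. Qed.

Lemma delta_mulmx_delta u v (A : 'M[R]_N) : E u u *m A *m E v v = A u v *: E u v.
Proof.
apply/matrixP => i j; rewrite !mxE (bigD1 v) //= big1 => [|k /negbTE kv]; last first.
  by rewrite [E v v k j]mxE kv /= mulr0.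
rewrite mxE (bigD1 u) //= big1 => [|k /negbTE ku]; last by rewrite mxE ku andbF mul0r.
rewrite !mxE !eqxx !addr0 /=.
by case: (i == u); case: (j == v); rewrite /= ?(mul1r, mulr1, mul0r, mulr0).
Qed.

End MatrixUnits.

Section RootVectors.
Variable N : nat.
Local Notation E := (@delta_mx C N N).

Lemma lie_bracket_delta u v w : u != w -> lie_bracket (E u v) (E v w) = E u w.
Proof. by move=> uw; rewrite /lie_bracket mul_delta_mx mul_delta_mx_0 ?subr0 // eq_sym. Qed.

Lemma lie_bracket_sandwich u v (y : 'M[C]_N) : u != v ->
  let z := lie_bracket (E u u) (lie_bracket y (E v v)) in
  z + lie_bracket (E u u) z = 2 *: (E u u *m y *m E v v).
Proof.
move=> uv z.
have PQ : E u u *m E v v = 0 by rewrite mul_delta_mx_0.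
have QP : E v v *m E u u = 0 by rewrite mul_delta_mx_0 // eq_sym.
have PP : E u u *m E u u = E u u by rewrite mul_delta_mx.
have -> : z = E u u *m y *m E v v + E v v *m y *m E u u.
  rewrite /z /lie_bracket mulmxBr mulmxBl !mulmxA PQ mul0mx subr0.
  by rewrite -!mulmxA QP mulmx0 sub0r opprK !mulmxA.
rewrite /lie_bracket mulmxDr mulmxDl !mulmxA PP PQ !mul0mx addr0.
by rewrite -!mulmxA QP PP !mulmx0 add0r addrACA subrr addr0 scaler_nat mulr2n.
Qed.

(* [E u v], [E v u], [E u u - E v v] span a copy of sl_2, which is its own derived algebra. *)
Lemma sl2_mem_iter_derived (S : {vspace 'M[C]_N}) u v k : u != v ->
  E u v \in S -> E v u \in S -> E u u - E v v \in S ->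
  E u v \in iter k (@derived N) S.
Proof.
move=> uv; elim: k S => [//|k IH] S e f h.
have vu : v != u by rewrite eq_sym.
have two_neq0 : (2 : C) != 0 by rewrite pnatr_eq0.
have h_e : lie_bracket (E u u - E v v) (E u v) = 2 *: E u v.
  rewrite /lie_bracket mulmxBl mulmxBr !mul_delta_mx !mul_delta_mx_0 //.
  by rewrite subr0 sub0r opprK scaler_nat.
have f_h : lie_bracket (E v u) (E u u - E v v) = 2 *: E v u.
  rewrite /lie_bracket mulmxBl mulmxBr !mul_delta_mx !mul_delta_mx_0 //.
  by rewrite subr0 sub0r opprK scaler_nat.
have e_f : lie_bracket (E u v) (E v u) = E u u - E v v.
  by rewrite /lie_bracket !mul_delta_mx.
rewrite iterSr; apply: IH.
- by rewrite -[E u v](scalerK two_neq0) -h_e rpredZ ?mem_derived.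
- by rewrite -[E v u](scalerK two_neq0) -f_h rpredZ ?mem_derived.
- by rewrite -e_f mem_derived.
Qed.

Variable b : {vspace 'M[C]_N}.
Hypothesis b_lie : is_lie_subalgebra b.
Hypothesis b_diag : contains_diagonal_cartan b.

Lemma delta_diag_mem u : E u u \in b.
Proof.
suff -> : E u u = diag_mx (delta_mx 0 u) by apply: b_diag.
apply/matrixP => i j; rewrite !mxE eqxx /=.
by have [->|_] := eqVneq i u; rewrite ?mul0rn // eq_sym; case: (j == u).
Qed.

Lemma delta_mem_of_entry u v y : u != v -> y \in b -> y u v != 0 -> E u v \in b.
Proof.
move=> uv yb yuv; have two_yuv : 2 * y u v != 0 by rewrite mulf_neq0 ?pnatr_eq0.
have -> : E u v = (2 * y u v)^-1 *: (2 *: (E u u *m y *m E v v)).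
  by rewrite delta_mulmx_delta !scalerA -mulrA mulVf ?scale1r.
rewrite -lie_bracket_sandwich //; apply/rpredZ/rpredD; do ?apply: b_lie;
  by rewrite ?delta_diag_mem.
Qed.

Lemma solvable_no_opposite_roots u v : is_solvable b -> u != v ->
  E u v \in b -> E v u \in b -> False.
Proof.
move=> [k bk] uv e f; have h : E u u - E v v \in b by rewrite rpredB ?delta_diag_mem.
have := sl2_mem_iter_derived k uv e f h; rewrite bk memv0.
exact/negP/delta_mx_neq0.
Qed.

End RootVectors.

(** * Triangular algebras and the root order of a Borel subalgebra *)

Section RootSpan.
Variable N : nat.
Local Notation E := (@delta_mx C N N).

Definition rootspan (P : rel 'I_N) : {vspace 'M[C]_N} :=
  <<[seq E uv.1 uv.2 | uv <- enum [pred uv : 'I_N * 'I_N | P uv.1 uv.2]]>>%VS.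

Lemma mem_rootspan (P : rel 'I_N) (M : 'M[C]_N) :
  reflect (forall u v, ~~ P u v -> M u v = 0) (M \in rootspan P).
Proof.
apply: (iffP idP) => [MP u v nP|M0].
  move: MP; rewrite /rootspan; set X := map _ _ => /(coord_span (X := in_tuple X))->.
  rewrite summxE; apply: big1 => i _; rewrite mxE.
  have /mapP[[u' v']] : (in_tuple X)`_i \in X by rewrite mem_nth ?size_tuple.
  rewrite mem_enum inE /= => P'->; rewrite mxE.
  by have [eu|] := eqVneq u u'; have [ev|] := eqVneq v v';
    rewrite ?mulr0 //; move: nP; rewrite eu ev P'.
rewrite [M]matrix_sum_delta; apply: rpred_sum => u _; apply: rpred_sum => v _.
have [Puv|nP] := boolP (P u v); last by rewrite M0 // scale0r rpred0.
by apply/rpredZ/memv_span/mapP; exists (u, v); rewrite ?mem_enum.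
Qed.

Section Triangular.
Variable R : rel 'I_N.
Hypothesis R_irr : irreflexive R.
Hypothesis R_trans : forall u v w, R u v -> R v w -> R u w.
Local Notation ht := (height R).

(* A filtration of [triangular] by height gap that brackets raise by one. *)
Definition level k u v := (k == 0)%N && (u == v) || R u v && (ht u + k <= ht v)%N.

Lemma level_diag k u : level k u u = (k == 0)%N.
Proof. by rewrite /level eqxx andbT R_irr orbF. Qed.

Lemma level_offdiag k u v : u != v -> level k u v = R u v && (ht u + k <= ht v)%N.
Proof. by rewrite /level => /negbTE->; rewrite andbF. Qed.

Lemma level_comp k u w v :
  level k u w -> level k w v -> (u != w) || (w != v) -> level k.+1 u v.
Proof.
have ht_lt := height_lt R_irr R_trans.
have [<-|uw] := eqVneq u w.
  rewrite level_diag => /eqP-> + /= uv; rewrite !level_offdiag // => /andP[Ruv _].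
  by rewrite Ruv /=; have := ht_lt _ _ Ruv; lia.
rewrite level_offdiag // => /andP[Ruw le_uw]; have := ht_lt _ _ Ruw.
have [<-|wv] := eqVneq w v.
  by rewrite level_diag => lt_uw /eqP k0 _; rewrite level_offdiag // Ruw; lia.
rewrite level_offdiag // => lt_uw /andP[Rwv le_wv] _; have := ht_lt _ _ Rwv.
by rewrite /level (R_trans Ruw Rwv); lia.
Qed.

Lemma lie_bracket_level k M M' : M \in rootspan (level k) -> M' \in rootspan (level k) ->
  lie_bracket M M' \in rootspan (level k.+1).
Proof.
move=> /mem_rootspan M0 /mem_rootspan M'0; apply/mem_rootspan => u v nuv.
have term (A B : 'M[C]_N) w : (forall a b, ~~ level k a b -> A a b = 0) ->
    (forall a b, ~~ level k a b -> B a b = 0) -> (u != w) || (w != v) -> A u w * B w v = 0.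
  move=> A0 B0 uwv; have [Puw|/A0->] := boolP (level k u w); last by rewrite mul0r.
  have [Pwv|/B0->] := boolP (level k w v); last by rewrite mulr0.
  by rewrite (level_comp Puw Pwv uwv) in nuv.
rewrite /lie_bracket !mxE; have [euv|uv] := eqVneq u v.
  subst v; rewrite (bigD1 u) //= [X in _ - X](bigD1 u) //= !big1 ?addr0 => [|w wu|w wu].
  - by rewrite mulrC subrr.
  - by rewrite term // eq_sym wu.
  - by rewrite term // eq_sym wu.
by rewrite !big1 ?subrr // => w _; apply: term => //; case: eqVneq => // <-; rewrite uv orbT.
Qed.

Definition triangular := rootspan (level 0).

Lemma iter_derived_triangular k : (iter k (@derived N) triangular <= rootspan (level k))%VS.
Proof.
elim: k => [|k IH] /=; first exact: subvv.
apply: derived_subv => x y xS yS; apply: lie_bracket_level; exact: (subvP IH).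
Qed.

Lemma mem_triangular (M : 'M[C]_N) :
  reflect (forall u v, u != v -> ~~ R u v -> M u v = 0) (M \in triangular).
Proof.
apply: (iffP (mem_rootspan _ _)) => M0 u v.
  by move=> uv nR; apply: M0; rewrite level_offdiag // (negbTE nR).
have [<-|uv] := eqVneq u v; first by rewrite level_diag.
rewrite level_offdiag // => nl; apply: M0 => //; apply: contra nl => Ruv.
by rewrite Ruv addn0 ltnW // height_lt.
Qed.

Lemma triangular_lie : is_lie_subalgebra triangular.
Proof.
move=> x y xS yS; have /mem_rootspan br0 := lie_bracket_level xS yS.
by apply/mem_triangular => u v uv nR; rewrite br0 // level_offdiag // (negbTE nR).
Qed.

Lemma triangular_solvable : is_solvable triangular.
Proof.
exists N.+1; apply/vspaceP => x; rewrite memv0; apply/idP/idP => [|/eqP->]; last exact: rpred0.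
move=> /(subvP (iter_derived_triangular _))/mem_rootspan x0.
apply/eqP/matrixP => u v; rewrite mxE x0 //.
by apply/negP => /orP[//|/andP[_]]; have := height_le_card R v; rewrite card_ord; lia.
Qed.

End Triangular.
End RootSpan.

Definition order_mx (R : ringType) s (T : rel 'I_s) (d : 'I_s -> R) : 'M[R]_s :=
  diag_mx (\row_a d a) + \matrix_(a, b) (T a b)%:R.

Section BorelRootOrder.
Variables (N : nat) (b : {vspace 'M[C]_N}).
Hypotheses (b_borel : is_borel b) (b_diag : contains_diagonal_cartan b).
Local Notation E := (@delta_mx C N N).

Definition root_rel u v := (u != v) && (E u v \in b).

Lemma root_rel_irr : irreflexive root_rel.
Proof. by move=> u; rewrite /root_rel eqxx. Qed.

Lemma root_rel_trans u v w : root_rel u v -> root_rel v w -> root_rel u w.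
Proof.
have [b_lie b_solv _] := b_borel; move=> /andP[uv e_uv] /andP[vw e_vw].
have uw : u != w.
  by apply/eqP => uw; subst w; apply: (solvable_no_opposite_roots b_diag b_solv uv e_uv e_vw).
by rewrite /root_rel uw -(lie_bracket_delta v uw) b_lie.
Qed.

Lemma borel_sub_triangular (R : rel 'I_N) : irreflexive R ->
  (forall u v w, R u v -> R v w -> R u w) -> (forall u v, root_rel u v -> R u v) ->
  (b <= triangular R)%VS.
Proof.
have [b_lie _ _] := b_borel; move=> R_irr R_trans sub; apply/subvP => y yb.
apply/(mem_triangular R_irr R_trans) => u v uv; apply: contraNeq => yuv.
by apply: sub; rewrite /root_rel uv (delta_mem_of_entry b_lie b_diag uv yb yuv).
Qed.

(* Otherwise [b] would lie properly inside the triangular algebra of the order extending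
   [root_rel] by [u < v]. *)
Lemma root_rel_total u v : u != v -> root_rel u v || root_rel v u.
Proof.
move=> uv; apply/norP => -[nuv nvu]; have [_ _ b_max] := b_borel.
pose R := rel_extend root_rel u v.
have R_irr : irreflexive R := rel_extend_irr root_rel_irr root_rel_trans uv nvu.
have R_trans := rel_extend_trans root_rel_irr root_rel_trans uv nvu.
have b_eq : triangular R = b.
  apply: b_max; [exact: triangular_lie | exact: triangular_solvable |].
  by apply: borel_sub_triangular => // x y Rxy; rewrite /R /rel_extend Rxy.
have : E u v \in triangular R.
  apply/(mem_triangular R_irr R_trans) => x y _; rewrite mxE.
  have [-> | //=] := eqVneq x u; have [-> | //=] := eqVneq y v.
  by rewrite /R /rel_extend !eqxx orbT.
by rewrite b_eq => e_uv; move: nuv; rewrite /root_rel uv e_uv.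
Qed.

Lemma order_mx_mem (d : 'I_N -> C) : order_mx root_rel d \in b.
Proof.
apply: rpredD; first exact: b_diag.
rewrite [X in X \in b]matrix_sum_delta; apply: rpred_sum => u _; apply: rpred_sum => v _.
by rewrite mxE; case: (boolP (root_rel u v)) => [/andP[_ /rpredZ->] | _]; rewrite ?scale0r ?rpred0.
Qed.

End BorelRootOrder.

(** * Polynomials in an order matrix *)

Section PolyEigen.
Variables (R : idomainType) (n : nat) (A : 'M[R]_n) (cf : nat -> R) (k : nat).
Local Notation Q := (\sum_(j < k) cf j *: A ^+ j).

Lemma poly_eigen_col (L : 'rV_n) a m : L *m A = a *: L -> L 0 m != 0 ->
  (forall i, Q i m = 0) -> \sum_(j < k) cf j * a ^+ j = 0.
Proof.
move=> La Lm Q0; have LQ : L *m Q = (\sum_(j < k) cf j * a ^+ j) *: L.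
  rewrite mulmx_sumr scaler_suml; apply: eq_bigr => j _; rewrite -scalemxAr -scalerA.
  congr (_ *: _); elim: (nat_of_ord j) => [|i IH]; first by rewrite mulmx1 scale1r.
  by rewrite exprSr mulmxA IH -scalemxAl La scalerA -exprSr.
have /eqP := congr1 (fun M : 'rV_n => M 0 m) LQ.
by rewrite mxE big1 ?mxE => [|i _]; rewrite ?Q0 ?mulr0 // eq_sym mulf_eq0 (negbTE Lm) orbF => /eqP.
Qed.

Lemma poly_eigen_row (K : 'cV_n) a m : A *m K = a *: K -> K m 0 != 0 ->
  (forall i, Q m i = 0) -> \sum_(j < k) cf j * a ^+ j = 0.
Proof.
move=> Ka Km Q0; have QK : Q *m K = (\sum_(j < k) cf j * a ^+ j) *: K.
  rewrite mulmx_suml scaler_suml; apply: eq_bigr => j _; rewrite -scalemxAl -scalerA.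
  congr (_ *: _); elim: (nat_of_ord j) => [|i IH]; first by rewrite mul1mx scale1r.
  by rewrite exprS -mulmxA IH -scalemxAr Ka scalerA -exprSr.
have /eqP := congr1 (fun M : 'cV_n => M m 0) QK.
by rewrite mxE big1 ?mxE => [|i _]; rewrite ?Q0 ?mul0r // eq_sym mulf_eq0 (negbTE Km) orbF => /eqP.
Qed.

End PolyEigen.

Section OrderMatrix.
Variables (F : fieldType) (s : nat) (d : 'I_s -> F).
Hypothesis d_inj : injective d.
Hypothesis d_shift : forall a b, d a - d b + 1 != 0.

Lemma order_mxE (T : rel 'I_s) a b : order_mx T d a b = d a *+ (a == b) + (T a b)%:R.
Proof. by rewrite !mxE. Qed.

Lemma trmx_order_mx (T : rel 'I_s) : (order_mx T d)^T = order_mx (fun a b => T b a) d.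
Proof. by apply/matrixP => a b; rewrite mxE !order_mxE eq_sym; have [->|] := eqVneq b a. Qed.

Section LeftEigenvector.
Variable T : rel 'I_s.
Hypothesis T_irr : irreflexive T.
Hypothesis T_trans : forall u v w, T u v -> T v w -> T u w.
Hypothesis T_total : forall u v, u != v -> T u v || T v u.

Lemma row_mulmx_order_mx (L : 'rV[F]_s) b :
  (L *m order_mx T d) 0 b = L 0 b * d b + \sum_(a | T a b) L 0 a.
Proof.
rewrite mxE (bigD1 b) //= order_mxE eqxx T_irr mulr1n addr0; congr (_ + _).
rewrite big_mkcond [RHS]big_mkcond /=; apply: eq_bigr => a _.
have [->|ab] := eqVneq a b; first by rewrite T_irr.
by rewrite order_mxE (negbTE ab) mulr0n add0r; case: (T a b); rewrite ?mulr1 ?mulr0.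
Qed.

Lemma sum_le_rel (f : 'I_s -> F) b :
  \sum_(a | (a == b) || T a b) f a = f b + \sum_(a | T a b) f a.
Proof.
rewrite (bigD1 b) ?eqxx //=; congr (_ + _); apply: eq_bigl => a.
by have [->|_] := eqVneq a b; rewrite /= ?T_irr ?andbT.
Qed.

Variable c : 'I_s.

Let w a := (d c - d a + 1) / (d c - d a).

(* Solving [ev *m order_mx T d = d c *: ev] column by column along the order gives these
   coordinates: their partial sums over initial segments are the products of the [w a]
   ([ev_partial_sum]). *)
Let ev b : F :=
  if b == c then 1 else if T c b then (\prod_(a | T c a && T a b) w a) / (d c - d b) else 0.

Lemma sub_d_neq0 a : a != c -> d c - d a != 0.
Proof. by move=> ac; rewrite subr_eq0; apply: contra ac => /eqP/d_inj->. Qed.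

Lemma ev_out a : ~~ ((c == a) || T c a) -> ev a = 0.
Proof. by rewrite negb_or /ev eq_sym => /andP[/negbTE-> /negbTE->]. Qed.

Lemma ev_above b : T c b -> ev b = (\prod_(a | T c a && T a b) w a) / (d c - d b).
Proof. by move=> Tcb; rewrite /ev eq_sym (negbTE (rel_neq T_irr Tcb)) Tcb. Qed.

Lemma ev_below b : (b == c) || T b c -> \sum_(a | T a b) ev a = 0.
Proof.
move=> le_bc; apply: big1 => a Tab; apply: ev_out; apply/negP => le_ca.
have T_asym := rel_asym T_irr T_trans.
case/orP: le_bc le_ca => [/eqP bc|Tbc] /orP[/eqP ca|Tca].
- by subst; rewrite T_irr in Tab.
- by subst; rewrite (T_asym _ _ Tca) in Tab.
- by subst; rewrite (T_asym _ _ Tab) in Tbc.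
- by have := T_trans (T_trans Tca Tab) Tbc; rewrite T_irr.
Qed.

Lemma prod_w_le b : T c b ->
  \prod_(a | T c a && ((a == b) || T a b)) w a = w b * \prod_(a | T c a && T a b) w a.
Proof.
move=> Tcb; rewrite (bigD1 b) /= ?Tcb ?eqxx //; congr (_ * _); apply: eq_bigl => a.
by have [->|] := eqVneq a b; rewrite ?T_irr ?andbF ?andbT.
Qed.

Lemma ev_partial_sum b : (c == b) || T c b ->
  \sum_(a | (a == b) || T a b) ev a = \prod_(a | T c a && ((a == b) || T a b)) w a.
Proof.
have [k] := ubnP (height T b); elim: k b => [|k IH] b //= hb.
rewrite sum_le_rel; case/orP => [/eqP<-|Tcb].
  rewrite ev_below ?eqxx // /ev eqxx addr0 big_pred0 // => a.
  have [->|_] := eqVneq a c; first by rewrite T_irr.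
  by case Tca: (T c a); rewrite //= (rel_asym T_irr T_trans Tca).
have [b' Tb'b Tab] := rel_pred T_irr T_trans T_total Tcb.
have le_cb' : (c == b') || T c b' by rewrite -Tab.
have lt_b' : (height T b' < k)%N by have := height_lt T_irr T_trans Tb'b; lia.
have prod_b : \prod_(a | T c a && T a b) w a = \prod_(a | T c a && ((a == b') || T a b')) w a.
  by apply: eq_bigl => a; rewrite Tab.
rewrite (eq_bigl _ _ Tab) (IH b' lt_b' le_cb') (ev_above Tcb) (prod_w_le Tcb) prod_b /w.
by field; rewrite sub_d_neq0 // eq_sym (rel_neq T_irr Tcb).
Qed.

Lemma ev_eigen : \row_b ev b *m order_mx T d = d c *: \row_b ev b.
Proof.
apply/rowP => b; rewrite row_mulmx_order_mx !mxE.
under eq_bigr do rewrite mxE.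
have [->|bc] := eqVneq b c; first by rewrite ev_below ?eqxx // /ev eqxx addr0 mulr1 mul1r.
case/orP: (T_total bc) => [Tbc|Tcb].
  rewrite ev_below ?Tbc ?orbT // ev_out ?mul0r ?mulr0 ?addr0 //.
  by rewrite negb_or eq_sym bc (rel_asym T_irr T_trans Tbc).
rewrite -[\sum_(a | T a b) _](addKr (ev b)) -sum_le_rel ev_partial_sum ?Tcb ?orbT //.
rewrite prod_w_le // ev_above // /w.
by field; rewrite sub_d_neq0 // eq_sym (rel_neq T_irr Tcb).
Qed.

Lemma ev_neq0 m : (c == m) || T c m -> ev m != 0.
Proof.
case/orP => [/eqP<-|Tcm]; first by rewrite /ev eqxx oner_eq0.
rewrite ev_above //; apply: mulf_neq0.
  apply/prodf_neq0 => a /andP[Tca _].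
  by apply: mulf_neq0; rewrite ?invr_eq0 ?d_shift ?sub_d_neq0 // eq_sym (rel_neq T_irr Tca).
by rewrite invr_eq0 sub_d_neq0 // eq_sym (rel_neq T_irr Tcm).
Qed.

Lemma left_eigenvector m : exists L : 'rV[F]_s,
  L *m order_mx T d = d c *: L /\ ((c == m) || T c m -> L 0 m != 0).
Proof. by exists (\row_b ev b); split; [exact: ev_eigen | rewrite mxE; apply: ev_neq0]. Qed.

End LeftEigenvector.

Lemma right_eigenvector (T : rel 'I_s) : irreflexive T ->
    (forall u v w, T u v -> T v w -> T u w) -> (forall u v, u != v -> T u v || T v u) ->
  forall c m, exists K : 'cV[F]_s,
    order_mx T d *m K = d c *: K /\ ((m == c) || T m c -> K m 0 != 0).
Proof.
move=> T_irr T_trans T_total c m.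
have [||| L [L_eigen Lm]] := @left_eigenvector (fun a b => T b a) _ _ _ c m.
- exact: T_irr.
- by move=> u v w Tvu Twv; apply: T_trans Twv Tvu.
- by move=> u v uv; rewrite orbC T_total.
exists L^T; split; last by rewrite mxE eq_sym.
by rewrite -[order_mx T d]trmxK trmx_order_mx -trmx_mul L_eigen linearZ.
Qed.

(* [p = \sum_j cf j X^j] vanishes at every eigenvalue [d c] (pair row [m] of [p(order_mx T d)]
   with a right eigenvector, or its column [m] with a left one), and [size p <= s]. *)
Lemma order_mx_poly_eq0 (T : rel 'I_s) : irreflexive T ->
    (forall u v w, T u v -> T v w -> T u w) -> (forall u v, u != v -> T u v || T v u) ->
  forall m (cf : nat -> F),
    (forall b, (\sum_(j < s) cf j *: order_mx T d ^+ j) m b = 0) ->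
    (forall a, (\sum_(j < s) cf j *: order_mx T d ^+ j) a m = 0) ->
  forall j, (j < s)%N -> cf j = 0.
Proof.
move=> T_irr T_trans T_total m cf Qrow Qcol j lt_js.
pose p := \poly_(j < s) cf j.
have p_root c : root p (d c).
  rewrite /root horner_poly; case/orP: (rel_total_le T_total c m) => [le_cm|Tmc].
    have [L [L_eigen Lm]] := left_eigenvector T_irr T_trans T_total c m.
    by rewrite (poly_eigen_col L_eigen (Lm le_cm) Qcol).
  have [K [K_eigen Km]] := right_eigenvector T_irr T_trans T_total c m.
  by rewrite (poly_eigen_row K_eigen _ Qrow) // Km // Tmc orbT.
have p0 : p = 0.
  apply/eqP/negPn/negP => p_neq0.
  have := max_poly_roots p_neq0 (rs := [seq d c | c <- enum 'I_s]).
  rewrite size_map size_enum_ord (map_inj_uniq d_inj) enum_uniq.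
  have -> : all (root p) [seq d c | c <- enum 'I_s] by apply/allP => _ /mapP[c _ ->].
  by move=> /(_ isT isT); rewrite ltnNge size_poly.
by have := coef_poly s cf j; rewrite lt_js -/p p0 coef0.
Qed.

End OrderMatrix.

(** * The differentials of the functions [f_(i,j)] *)

Section TraceDerivative.
Variables (R : comRingType) (K : nat) (k : 'I_K).
Local Notation D := (map_mx (mderiv k)).

Lemma map_mx_mderivM m n p (A : 'M[{mpoly R[K]}]_(m, n)) (B : 'M_(n, p)) :
  D (A *m B) = D A *m B + A *m D B.
Proof.
apply/matrixP => i j; rewrite !mxE raddf_sum -big_split /=.
by apply: eq_bigr => l _; rewrite mderivM !mxE.
Qed.

Lemma mderiv_mxtrace n (A : 'M[{mpoly R[K]}]_n) : mderiv k (\tr A) = \tr (D A).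
Proof. by rewrite /mxtrace raddf_sum; apply: eq_bigr => i _; rewrite mxE. Qed.

Lemma mxtrace_mderiv_exp_mul n (A : 'M[{mpoly R[K]}]_n) j l :
  \tr (D (A ^+ j.+1) *m A ^+ l) = j.+1%:R * \tr (A ^+ (j + l) *m D A).
Proof.
elim: j l => [|j IH] l; first by rewrite expr1 mxtrace_mulC mul1r.
rewrite exprSr -mulmxE map_mx_mderivM mulmxDl mxtraceD -mulmxA mulmxE -exprS IH.
rewrite -!mulmxE [X in _ + X]mxtrace_mulC mulmxA mulmxE -exprD.
by rewrite !addnS addSn (addnC l) -(addn1 j.+1) natrD mulrDl mul1r.
Qed.

Lemma mderiv_mxtrace_exp n (A : 'M[{mpoly R[K]}]_n) j :
  mderiv k (\tr (A ^+ j.+1)) = j.+1%:R * \tr (A ^+ j *m D A).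
Proof.
by rewrite mderiv_mxtrace; have := mxtrace_mderiv_exp_mul A j 0; rewrite expr0 mulmx1 addn0.
Qed.

End TraceDerivative.

Section UpperLeftBlocks.
Variables (R : ringType) (N : nat) (i : 'I_N).
Local Notation w := (widen_ord (ltn_ord i)).

Lemma ulsub_delta_widen (a b : 'I_i.+1) :
  ulsub i (delta_mx (w a) (w b)) = delta_mx a b :> 'M[R]_i.+1.
Proof. by apply/matrixP => a' b'; rewrite !mxE. Qed.

Lemma ulsub_delta_out (a b : 'I_N) :
  (i < a)%N || (i < b)%N -> ulsub i (delta_mx a b) = 0 :> 'M[R]_i.+1.
Proof.
move=> out; apply/matrixP => a' b'; rewrite !mxE.
case: eqP => [ea|]; case: eqP => [eb|] //=.
by move: out; rewrite -ea -eb /=; have := ltn_ord a'; have := ltn_ord b'; lia.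
Qed.

End UpperLeftBlocks.

Lemma mxtrace_mul_delta (R : ringType) n (A : 'M[R]_n) a b : \tr (A *m delta_mx a b) = A b a.
Proof.
rewrite /mxtrace (bigD1 b) //= big1 => [|c cb]; last first.
  by rewrite mxE big1 // => l _; rewrite mxE (negbTE cb) andbF mulr0.
rewrite mxE (bigD1 a) //= big1 => [|l la]; last by rewrite mxE (negbTE la) mulr0.
by rewrite mxE !eqxx mulr1 !addr0.
Qed.

Section Differentials.
Variable N : nat.

Lemma ulsub_map (T U : Type) (f : T -> U) (i : 'I_N) (A : 'M[T]_N) :
  map_mx f (ulsub i A) = ulsub i (map_mx f A).
Proof. by apply/matrixP => a b; rewrite !mxE. Qed.

Lemma mxvec_index_eq (a a' b b' : 'I_N) :
  (mxvec_index a b == mxvec_index a' b') = (a == a') && (b == b').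
Proof.
apply/eqP/andP => [|[/eqP-> /eqP->]] //.
by rewrite /mxvec_index => /cast_ord_inj/enum_rank_inj[-> ->].
Qed.

Lemma mderiv_genmx a b : map_mx (mderiv (mxvec_index a b)) (Defs.genmx N) = delta_mx a b.
Proof.
apply/matrixP => a' b'; rewrite !mxE mderivX mnm1E mxvec_index_eq.
case: andP => [[/eqP-> /eqP->]|_]; last by rewrite scale0r.
have -> : (U_(mxvec_index a b) - U_(mxvec_index a b) = 0)%MM.
  by apply/mnmP => l; rewrite mnmBE mnm0E subnn.
by rewrite mpolyX0 scale1r.
Qed.

Lemma meval_genmx (x : 'M[C]_N) : map_mx (meval (coords x)) (Defs.genmx N) = x.
Proof. by apply/matrixP => a b; rewrite !mxE mevalXU /coords mxvecE. Qed.

Lemma dGZE (p : GZindex N) (x : 'M[C]_N) (i j a b : 'I_N) : val p = (i, j) ->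
  dGZ p x 0 (mxvec_index a b) = j.+1%:R * \tr (ulsub i x ^+ j *m ulsub i (delta_mx a b)).
Proof.
move=> vp; rewrite /dGZ mxE /fGZ vp mderiv_mxtrace_exp ulsub_map mderiv_genmx.
rewrite rmorphM rmorph_nat -trace_map_mx map_mxM rmorphXn /= !ulsub_map meval_genmx.
by rewrite map_delta_mx.
Qed.

Lemma dGZ_widen (p : GZindex N) (x : 'M[C]_N) (i j : 'I_N) (a b : 'I_i.+1) :
  val p = (i, j) -> dGZ p x 0 (mxvec_index (widen_ord (ltn_ord i) a) (widen_ord (ltn_ord i) b)) =
    j.+1%:R * (ulsub i x ^+ j) b a.
Proof. by move=> vp; rewrite (dGZE x _ _ vp) ulsub_delta_widen mxtrace_mul_delta. Qed.

Lemma dGZ_out (p : GZindex N) (x : 'M[C]_N) (i j a b : 'I_N) : val p = (i, j) ->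
  (i < a)%N || (i < b)%N -> dGZ p x 0 (mxvec_index a b) = 0.
Proof. by move=> vp out; rewrite (dGZE x _ _ vp) ulsub_delta_out // mulmx0 mxtrace0 mulr0. Qed.

End Differentials.

(** * Strong regularity of order matrices *)

Section StronglyRegular.
Variables (N : nat) (T : rel 'I_N) (d : 'I_N -> C).
Hypothesis T_irr : irreflexive T.
Hypothesis T_trans : forall u v w, T u v -> T v w -> T u w.
Hypothesis T_total : forall u v, u != v -> T u v || T v u.
Hypothesis d_inj : injective d.
Hypothesis d_shift : forall a b, d a - d b + 1 != 0.
Local Notation x := (order_mx T d).

Section Block.
Variable i : 'I_N.
Local Notation w := (widen_ord (ltn_ord i)).
Local Notation G := (ulsub i x).

Definition gz_at (j : 'I_i.+1) : GZindex N := Sub (i, w j) (ltn_ord j).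

Lemma ulsub_order_mx : G = order_mx (fun a b => T (w a) (w b)) (fun a => d (w a)).
Proof. by apply/matrixP => a b; rewrite !mxE. Qed.

Lemma block_poly_eq0 (cf : nat -> C) :
  (forall b, (\sum_(j < i.+1) cf j *: G ^+ j) ord_max b = 0) ->
  (forall a, (\sum_(j < i.+1) cf j *: G ^+ j) a ord_max = 0) ->
  forall j, (j < i.+1)%N -> cf j = 0.
Proof.
rewrite ulsub_order_mx; apply: order_mx_poly_eq0.
- by move=> u v /d_inj [/val_inj].
- by move=> u v; apply: d_shift.
- by move=> u; apply: T_irr.
- by move=> u v z; apply: T_trans.
- by move=> u v uv; apply: T_total.
Qed.

Lemma gz_atK (q : GZindex N) : (val q).1 = i -> gz_at (inord (val q).2) = q.
Proof.
move=> q_i; apply: val_inj; rewrite [RHS]surjective_pairing /= q_i; congr (_, _).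
by apply: val_inj; rewrite /= inordK // ltnS -q_i (valP q).
Qed.

Variable c : GZindex N -> C.
Hypothesis c_rel : forall a b, \sum_p c p * dGZ p x 0 (mxvec_index a b) = 0.
Hypothesis c_above : forall q : GZindex N, (i < (val q).1)%N -> c q = 0.

Lemma block_entry_sum a b : (a == i) || (b == i) ->
  \sum_p c p * dGZ p x 0 (mxvec_index a b) =
  \sum_(j < i.+1) c (gz_at j) * dGZ (gz_at j) x 0 (mxvec_index a b).
Proof.
move=> ab_i; rewrite (bigID (fun q => (val q).1 == i)) /= [X in _ + X]big1 ?addr0.
  rewrite (reindex_onto gz_at (fun q => inord (val q).2)) /=.
    by apply: eq_bigl => j; rewrite eqxx; apply/eqP/val_inj; rewrite /= inordK.
  by move=> q /eqP /gz_atK.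
move=> q; case vq: (val q) => [iq jq] /= /negbTE q_i.
have [lt_qi|gt_qi|eq_qi] := ltngtP iq i.
- rewrite (dGZ_out x vq) ?mulr0 //.
  by case/orP: ab_i => /eqP->; rewrite lt_qi ?orbT.
- by rewrite c_above ?mul0r // vq.
- by move: q_i; rewrite (val_inj eq_qi) eqxx.
Qed.

Let cf (j : nat) := c (gz_at (inord j)) * j.+1%:R.

Lemma widen_ord_max : w ord_max = i.
Proof. exact: val_inj. Qed.

Lemma block_row b : (\sum_(j < i.+1) cf j *: G ^+ j) ord_max b = 0.
Proof.
rewrite -[RHS](c_rel (w b) (w ord_max)) block_entry_sum; last first.
  by rewrite widen_ord_max eqxx orbT.
rewrite summxE; apply: eq_bigr => j _.
by rewrite mxE (dGZ_widen (p := gz_at j) x _ _ erefl) /cf inord_val mulrA.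
Qed.

Lemma block_col a : (\sum_(j < i.+1) cf j *: G ^+ j) a ord_max = 0.
Proof.
rewrite -[RHS](c_rel (w ord_max) (w a)) block_entry_sum; last by rewrite widen_ord_max eqxx.
rewrite summxE; apply: eq_bigr => j _.
by rewrite mxE (dGZ_widen (p := gz_at j) x _ _ erefl) /cf inord_val mulrA.
Qed.

Lemma block_zero p : (val p).1 = i -> c p = 0.
Proof.
move=> p_i; have le_pi : ((val p).2 < i.+1)%N by rewrite ltnS -p_i (valP p).
have := block_poly_eq0 block_row block_col le_pi.
by rewrite /cf gz_atK // => /eqP; rewrite mulf_eq0 pnatr_eq0 orbF => /eqP.
Qed.

End Block.

Theorem order_mx_strongly_regular : strongly_regular x.
Proof.
move=> c c_sum.
have c_rel a b : \sum_p c p * dGZ p x 0 (mxvec_index a b) = 0.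
  have := congr1 (fun M : 'rV[C]_(N * N) => M 0 (mxvec_index a b)) c_sum.
  by rewrite summxE mxE; under eq_bigr do rewrite mxE.
suff c0 k (p : GZindex N) : (N - k <= (val p).1)%N -> c p = 0 by move=> p; apply: (c0 N); lia.
elim: k p => [|k IH] p; first by have := ltn_ord (val p).1; lia.
have [le_p _|lt_p le_p] := leqP (N - k) (val p).1; first exact: IH.
by apply: (block_zero c_rel (i := (val p).1)) => // q lt_q; apply: IH; lia.
Qed.

End StronglyRegular.

Section EvenNaturals.
Variables (R : numDomainType) (n : nat).

Lemma double_nat_inj : injective (fun u : 'I_n => (2 * u)%:R : R).
Proof. by move=> u v /eqP; rewrite eqr_nat => /eqP uv; apply: val_inj => /=; lia. Qed.

Lemma double_nat_shift (u v : 'I_n) : (2 * u)%:R - (2 * v)%:R + 1 != 0 :> R.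
Proof.
apply/eqP => h; have : (2 * u).+1%:R = (2 * v)%:R :> R.
  by rewrite -addn1 natrD; apply/eqP; rewrite -subr_eq0 addrAC h.
by move/eqP; rewrite eqr_nat => /eqP; lia.
Qed.

End EvenNaturals.

Theorem proposition5p2 (n : nat) (b : {vspace 'M[C]_(n.+1)}) :
  is_borel b -> contains_diagonal_cartan b ->
  exists x : 'M[C]_(n.+1), x \in b /\ strongly_regular x.
Proof.
move=> b_borel b_diag; pose d (u : 'I_n.+1) : C := (2 * u)%:R.
exists (order_mx (root_rel b) d); split; first exact: order_mx_mem.
apply: order_mx_strongly_regular.
- exact: root_rel_irr.
- exact: root_rel_trans b_borel b_diag.
- exact: root_rel_total b_borel b_diag.
- exact: double_nat_inj.
- exact: double_nat_shift.
Qed.
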